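(* Let $(\Omega,\mathcal{A},\mu)$ be a diffuse $\sigma$-finite measure space, let $p\in[1,\infty)$, and let $q\in(1,\infty]$ with $\frac1p+\frac1q=1$. Let $\eta\in L_q(\mu)$ and $g\in L_p(\mu)$ with $\eta\ge0$, $g\ge0$, and define $K\in\mathcal{L}(L_p(\mu))$ by \[ Kf:=\Bigl(\int\eta f\,d\mu\Bigr)g\qquad(f\in L_p(\mu)). \] Let $u\in L_\infty(\mu)$ with $u\ge0$ be such that $M_u\le K$, i.e. $K-M_u$ is a positive operator. Then $u=0$.
   Context: $\mu$ is diffuse if every measurable $A$ with $\mu(A)>0$ contains a measurable $A'$ with $0<\mu(A')<\mu(A)$. $M_u$ is the multiplication operator $M_uf:=uf$ on $L_p(\mu)$. An operator $S\in\mathcal{L}(L_p(\mu))$ is positive if $Sf\ge0$ for all $f\ge0$ in $L_p(\mu)$; $S\le T$ means $T-S$ is positive. *)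

From HB Require Import structures.
From mathcomp Require Import all_boot all_order all_algebra.
From mathcomp Require Import all_classical all_reals all_analysis.
Set Implicit Arguments. Unset Strict Implicit. Unset Printing Implicit Defensive.
Import Order.TTheory GRing.Theory Num.Theory.
Local Open Scope classical_set_scope.
Local Open Scope ring_scope.

Definition diffuse d (T : measurableType d) (R : realType)
    (mu : {measure set T -> \bar R}) : Prop :=
  forall A : set T, measurable A -> (0 < mu A)%E ->
    exists A' : set T, [/\ measurable A', A' `<=` A,
                           (0 < mu A')%E & (mu A' < mu A)%E].

Definition Kop d (T : measurableType d) (R : realType)
    (mu : {measure set T -> \bar R}) (eta g f : T -> R) : T -> R :=
  fun x => fine (\int[mu]_y ((eta y * f y)%:E))%E * g x.

From HB Require Import structures.
From mathcomp Require Import all_boot all_order all_algebra.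
From mathcomp Require Import all_classical all_reals all_analysis.
From mathcomp Require Import measurable_realfun.
Import Order.TTheory GRing.Theory Num.Theory.
Local Open Scope classical_set_scope.
Local Open Scope ring_scope.

(* Testing M_u <= K on an indicator 1_B shows that at almost every point of B,
   u <= (\int_B eta) g <= M^2 mu(B) as soon as eta and g are bounded by M on B.
   So on a set A of finite measure where u >= eps and 0 <= eta, g <= M, every
   subset of positive measure has measure at least eps / M^2.  A diffuse
   measure allows no such set of positive measure: splitting again and again,
   every positive-measure subset of A would have measure at least k eps / M^2
   for all k.  By sigma-finiteness, countably many such null sets A exhaust
   {u > 0}. *)

Section measure_facts.
Context {d} {T : measurableType d} {R : realType}.
Variable mu : {measure set T -> \bar R}.
Local Open Scope ereal_scope.

Lemma Lfun_indic {p : R} {B : set T} :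
  (1 <= p)%R -> measurable B -> mu B < +oo -> (\1_B : T -> R) \in Lfun mu p%:E.
Proof.
move=> p1 mB muB; rewrite inE; apply/andP; split.
  by rewrite inE; exact: measurable_indic.
have p0 : p != 0%R by rewrite gt_eqF // (lt_le_trans ltr01 p1).
rewrite inE /= /finite_norm unlock /Lnorm; apply: poweR_lty.
under eq_integral => x _.
  rewrite (_ : _ `^ p = (\1_B x)%:E); last first.
    by rewrite /= indicE; case: (x \in B);
      rewrite ?normr1 ?powR1 ?normr0 ?powR0.
  over.
by rewrite integral_indic // setIT.
Qed.

Lemma ae_exists_in {P : T -> Prop} {B : set T} :
  {ae mu, forall x, P x} -> measurable B -> 0 < mu B -> exists2 x, B x & P x.
Proof.
move=> [N [mN N0 notPN]] mB muB; apply: contrapT => noBP.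
have : mu B <= mu N.
  apply: le_measure; rewrite ?inE // => x Bx.
  by apply: notPN => Px; apply: noBP; exists x.
by rewrite N0 leNgt muB.
Qed.

Lemma integral_mul_indic_bounds {f : T -> R} {B : set T} {M : R} :
  measurable_fun setT f -> measurable B -> (0 <= M)%R ->
  (forall x, B x -> 0 <= f x <= M)%R ->
  0 <= \int[mu]_x (f x * \1_B x)%:E <= M%:E * mu B.
Proof.
move=> mf mB M0 fB.
have fB_bounds x : (0 <= f x * \1_B x <= M * \1_B x)%R.
  rewrite indicE; case: (boolP (x \in B)) => [/set_mem/fB|];
  by rewrite ?mulr1 ?mulr0 ?lexx.
apply/andP; split.
  by apply: integral_ge0 => x _; rewrite lee_fin; case/andP: (fB_bounds x).
rewrite -[B in mu B]setIT -integral_indic // -integralZl_indic //; last first.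
  by move=> /(le_lt_trans M0); rewrite ltxx.
apply: ge0_le_integral => //= [x _|||x _]; rewrite ?lee_fin;
  try by case/andP: (fB_bounds x).
all: by apply/measurable_EFinP/measurable_funM => //; exact: measurable_indic.
Qed.

Lemma diffuse_small_subset {A : set T} {delta : R} :
  diffuse mu -> measurable A -> 0 < mu A -> mu A < +oo -> (0 < delta)%R ->
  exists B, [/\ measurable B, B `<=` A, 0 < mu B & mu B < delta%:E].
Proof.
move=> dif mA muA0 muAoo delta0; apply: contrapT => /forallNP noB.
have large B : measurable B -> B `<=` A -> 0 < mu B -> delta%:E <= mu B.
  by move=> mB BA muB; rewrite leNgt; apply/negP => ?; exact: (noB B).
have multiple k B : measurable B -> B `<=` A -> 0 < mu B ->
    (k%:R * delta)%:E <= mu B.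
  elim: k B => [|k IHk] B mB BA muB; first by rewrite mul0r measure_ge0.
  have [B' [mB' B'B muB' muB'B]] := dif B mB muB.
  have muB_split : mu B = mu B' + mu (B `\` B').
    by rewrite addeC (measureDI mu mB mB') setIidr.
  have muBB' : 0 < mu (B `\` B').
    rewrite lt0e measure_ge0 andbT; apply: contraTneq muB'B => muBB'0.
    by rewrite muB_split muBB'0 adde0 ltxx.
  rewrite muB_split -natr1 mulrDl mul1r EFinD addeC.
  apply: leeD; first exact: large (subset_trans B'B BA) muB'.
  apply: IHk => //; first exact: measurableD.
  exact: subset_trans (@subDsetl _ _ _) BA.
have [r muAr] : exists r : R, mu A = r%:E.
  by exists (fine (mu A)); rewrite fineK // ge0_fin_numE // measure_ge0.
have r_lt : (r < (Num.truncn (r / delta)).+1%:R * delta)%R.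
  by rewrite -ltr_pdivrMr // truncnS_gt.
have := multiple (Num.truncn (r / delta)).+1 A mA (@subset_refl _ A) muA0.
by rewrite muAr lee_fin leNgt r_lt.
Qed.

End measure_facts.

Definition cutoff_set {d} {T : measurableType d} {R : realType}
    (u eta g : T -> R) (eps M : R) : set T :=
  u @^-1` `[eps, +oo[ `&` eta @^-1` `[0, M] `&` g @^-1` `[0, M].

Section cutoff_set.
Context {d} {T : measurableType d} {R : realType} {u eta g : T -> R}.

Lemma measurable_cutoff_set (eps M : R) :
  measurable_fun setT u -> measurable_fun setT eta -> measurable_fun setT g ->
  measurable (cutoff_set u eta g eps M).
Proof.
have preimage_itv (f : T -> R) (i : interval R) : measurable_fun setT f ->
    measurable (f @^-1` [set` i]).
  move=> mf; rewrite -[_ @^-1` _]setTI.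
  by apply: mf => //; exact: measurable_itv.
move=> meas_u meas_eta meas_g.
by apply: measurableI; [apply: measurableI|]; exact: preimage_itv.
Qed.

Lemma cutoff_set_cover {x : T} : 0 <= eta x -> 0 <= g x -> 0 < u x ->
  exists n, cutoff_set u eta g n.+1%:R^-1 n.+1%:R x.
Proof.
move=> eta0 g0 u0; set m := Num.max (u x)^-1 (Num.max (eta x) (g x)).
exists (Num.truncn m); rewrite /cutoff_set /= !in_itv /= eta0 g0 andbT.
have := truncnS_gt m; rewrite !gt_max => /and3P[/ltW ux /ltW -> /ltW ->].
by rewrite invf_ple ?posrE.
Qed.

End cutoff_set.

Section rank_one_domination.
Context {d} {T : measurableType d} {R : realType}.
Variable mu : {measure set T -> \bar R}.
Context {p : R} {eta g u : T -> R}.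
Hypotheses (p1 : 1 <= p) (meas_eta : measurable_fun setT eta).
Hypothesis Ku : forall f : T -> R, f \in Lfun mu p%:E ->
  {ae mu, forall x, 0 <= f x} ->
  {ae mu, forall x, 0 <= Kop mu eta g f x - u x * f x}.

Lemma rank_one_domination_lbound {eps M : R} {B : set T} :
  0 <= M -> measurable B -> B `<=` cutoff_set u eta g eps M ->
  (0 < mu B)%E -> (mu B < +oo)%E -> (eps%:E <= (M * M)%:E * mu B)%E.
Proof.
move=> M0 mB Bcut muB0 muBoo.
have indicB_ge0 : {ae mu, forall x, 0 <= \1_B x :> R}.
  by apply: aeW => x; rewrite indicE.
have KindicB := Ku _ (Lfun_indic mu p1 mB muBoo) indicB_ge0.
have [x Bx] := ae_exists_in mu KindicB mB muB0.
rewrite /Kop indicE mem_set // mulr1 subr_ge0.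
have etaB y : B y -> 0 <= eta y <= M.
  by move=> /Bcut[[_]]; rewrite /= in_itv.
have [[/=]] := Bcut x Bx; rewrite !in_itv /= andbT => eps_u _ /andP[g0 gM].
have /andP[I0 IM] := integral_mul_indic_bounds mu meas_eta mB M0 etaB.
have [b muBb] : exists b : R, mu B = b%:E.
  by exists (fine (mu B)); rewrite fineK // ge0_fin_numE // measure_ge0.
set I := (\int[mu]_y _)%E in I0 IM *.
have Ifin : I \is a fin_num.
  by rewrite ge0_fin_numE //; apply: le_lt_trans IM _; rewrite muBb -EFinM ltry.
move=> u_le.
move: I0 IM; rewrite -(fineK Ifin) muBb -EFinM !lee_fin => I0 IM.
rewrite (le_trans eps_u) // (le_trans u_le) // mulrAC.
exact: ler_pM.
Qed.

Lemma rank_one_domination_cutoff_null {eps M : R} {A : set T} :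
  diffuse mu -> 0 < eps -> 0 < M -> measurable A ->
  A `<=` cutoff_set u eta g eps M -> (mu A < +oo)%E -> mu A = 0%E.
Proof.
move=> dif eps0 M0 mA Acut muAoo.
apply/eqP; rewrite eq_le measure_ge0 andbT leNgt; apply/negP => muA0.
have [B [mB BA muB0 muB_small]] :=
  diffuse_small_subset mu dif mA muA0 muAoo (divr_gt0 eps0 (mulr_gt0 M0 M0)).
have muBfin : mu B \is a fin_num.
  by rewrite ge0_fin_numE ?measure_ge0 // (lt_trans muB_small) ?ltry.
have := rank_one_domination_lbound (ltW M0) mB (subset_trans BA Acut) muB0
  (lt_trans muB_small (ltry _)).
move: muB_small; rewrite -(fineK muBfin) -EFinM !lte_fin lee_fin.
by rewrite ltr_pdivlMr ?mulr_gt0 // mulrC leNgt => ->.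
Qed.

End rank_one_domination.

Theorem lemma3p1 (d : measure_display) (T : measurableType d) (R : realType)
    (mu : {measure set T -> \bar R}) (p : R) (q : \bar R)
    (eta g u : T -> R) :
  sigma_finite [set: T] mu ->
  diffuse mu ->
  1 <= p ->
  q = hoelder_conjugate p%:E ->
  eta \in Lfun mu q ->
  g \in Lfun mu p%:E ->
  {ae mu, forall x, 0 <= eta x} ->
  {ae mu, forall x, 0 <= g x} ->
  u \in Lfun mu +oo%E ->
  {ae mu, forall x, 0 <= u x} ->
  (forall f : T -> R, f \in Lfun mu p%:E ->
     {ae mu, forall x, 0 <= f x} ->
     {ae mu, forall x, 0 <= Kop mu eta g f x - u x * f x}) ->
  {ae mu, forall x, u x = 0}.
Proof.
move=> [F FT Ffin] dif p1 _ etaL gL eta0 g0 uL u0 Ku.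
have [meas_eta meas_g meas_u] : [/\ measurable_fun setT eta,
    measurable_fun setT g & measurable_fun setT u].
  by split; [move: etaL | move: gL | move: uL] => /sub_Lfun_mfun; rewrite inE.
have cutoff_null k n :
    {ae mu, forall x, ~ (F k `&` cutoff_set u eta g n.+1%:R^-1 n.+1%:R) x}.
  set A := _ `&` _; have mA : measurable A.
    by apply: measurableI; [exact: (Ffin k).1 | exact: measurable_cutoff_set].
  exists A; split => //; last by move=> x /= /contrapT.
  apply: (rank_one_domination_cutoff_null mu p1 meas_eta Ku dif _ _ mA
    (@subIsetr _ _ _)).
  - by rewrite invr_gt0.
  - exact: ltr0Sn.
  - rewrite (le_lt_trans _ (Ffin k).2) // le_measure ?inE //.
      exact: (Ffin k).1.
    exact: subIsetl.
have outside_cutoffs := ae_foralln (fun k => ae_foralln (cutoff_null k)).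
near=> x.
have [eta_ge0 g_ge0 u_ge0] : [/\ 0 <= eta x, 0 <= g x & 0 <= u x].
  by split; [exact: (near eta0 x) | exact: (near g0 x) | exact: (near u0 x)].
apply/eqP; rewrite eq_le u_ge0 andbT leNgt; apply/negP => u_gt0.
have [n cut] := cutoff_set_cover eta_ge0 g_ge0 u_gt0.
have [k _ Fkx] : (\bigcup_k F k) x by rewrite -FT.
by apply: (near outside_cutoffs x _ k n).
Unshelve. all: by end_near.
Qed.
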